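(* With $F_1=1+5x-8x^2+x^3$, $G_0=1-x+x^2$, $G_1=1-235x+1430x^2-1695x^3+270x^4+229x^5+x^6$ and $\Phi_3(x)=\dfrac{1728x(x-1)F_1^7}{G_0^3G_1^3}$, in a neighborhood of $x=0$ (radical factors equal to $1$ at $x=0$): $${}_3F_2\!\left(-\tfrac1{14},\tfrac{11}{42},\tfrac{25}{42};\tfrac47,\tfrac57;\Phi_3\right)=(1-3x)(1-x)^{3/7}G_0^{-3/14}G_1^{-3/14},$$ $${}_3F_2\!\left(\tfrac3{14},\tfrac{23}{42},\tfrac{37}{42};\tfrac67,\tfrac97;\Phi_3\right)=\left(1-\tfrac{2x}{3}\right)(1-x)^{-2/7}F_1^{-2}G_0^{9/14}G_1^{9/14},$$ $${}_3F_2\!\left(\tfrac5{14},\tfrac{29}{42},\tfrac{43}{42};\tfrac87,\tfrac{10}7;\Phi_3\right)=\left(1+\tfrac{x}{2}\right)(1-x)^{-1/7}F_1^{-3}G_0^{15/14}G_1^{15/14}.$$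
   Context: ${}_3F_2(\alpha_1,\alpha_2,\alpha_3;\beta_1,\beta_2;z)=\sum_{n\ge0}\frac{(\alpha_1)_n(\alpha_2)_n(\alpha_3)_n}{(\beta_1)_n(\beta_2)_n n!}z^n$. *)

From Stdlib Require Import Reals Arith.
Open Scope R_scope.

Fixpoint poch (a : R) (n : nat) : R :=
  match n with
  | O => 1
  | S m => poch a m * (a + INR m)
  end.

Definition coef3F2 (a1 a2 a3 b1 b2 : R) (n : nat) : R :=
  poch a1 n * poch a2 n * poch a3 n / (poch b1 n * poch b2 n * INR (Factorial.fact n)).

Definition is_3F2 (a1 a2 a3 b1 b2 z v : R) : Prop :=
  infinite_sum (fun n => coef3F2 a1 a2 a3 b1 b2 n * z ^ n) v.

Definition F1 (x : R) : R := 1 + 5*x - 8*x^2 + x^3.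
Definition G0 (x : R) : R := 1 - x + x^2.
Definition G1 (x : R) : R :=
  1 - 235*x + 1430*x^2 - 1695*x^3 + 270*x^4 + 229*x^5 + x^6.
Definition Phi3 (x : R) : R :=
  1728 * x * (x - 1) * F1 x ^ 7 / (G0 x ^ 3 * G1 x ^ 3).

(* Pulling the hypergeometric equation back along [Phi3] turns the functions
   [theta^k 3F2 (Phi3 x)] (k = 0, 1, 2, [theta = z d/dz]) into a solution of a first-order
   system [x u' = A(x) u] whose coefficients are rational and regular at [x = 0]: this rests on
   [x Phi3' / Phi3 = Ll / Bl] and [1 - Phi3 = Ll^2 / Wl], both polynomial identities.  The
   proposed closed form, together with its successive [theta]-derivatives divided by
   [x Phi3' / Phi3], solves the same system; again this is a polynomial identity with rational
   coefficients, decided by computation.  Both solutions take the value [(1, 0, 0)] at [0].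
   Finally [x = 0] is a regular singular point whose exponents [0, 1 - b1, 1 - b2] are all
   below [1/2]; in eigen-coordinates of [A(0)] the squared norm [V] of the difference of two
   such solutions satisfies [x V' <= V] and [V = O(x^2)], which forces [V = 0]. *)

From Stdlib Require Import Reals QArith Qreals Lra List.
From Coquelicot Require Import Coquelicot.
Import ListNotations.
Open Scope R_scope.

(** * Polynomials with rational coefficients *)

(* A polynomial is the list of its coefficients, constant term first.  Identities between
   polynomials are decided by [vm_compute] through [pzerob]. *)

Fixpoint peval (p : list Q) (x : R) : R :=
  match p with nil => 0 | a :: p' => Q2R a + x * peval p' x end.

Fixpoint padd (p q : list Q) : list Q :=
  match p, q with
  | nil, _ => q
  | _, nil => p
  | a :: p', b :: q' => Qred (a + b) :: padd p' q'
  end.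

Definition pscal (c : Q) (p : list Q) : list Q := map (fun a => Qred (c * a)) p.

Fixpoint pmul (p q : list Q) : list Q :=
  match p with
  | nil => nil
  | a :: p' => padd (pscal a q) (0%Q :: pmul p' q)
  end.

Definition psub (p q : list Q) : list Q := padd p (pscal (-1) q).

Fixpoint pder (p : list Q) : list Q :=
  match p with nil => nil | _ :: p' => padd p' (0%Q :: pder p') end.

Fixpoint ppow (p : list Q) (n : nat) : list Q :=
  match n with O => [1%Q] | S m => pmul p (ppow p m) end.

Definition pzerob (p : list Q) : bool := forallb (fun a => Qeq_bool a 0) p.

Lemma Q2R_Qred (q : Q) : Q2R (Qred q) = Q2R q.
Proof. apply Qeq_eqR, Qred_correct. Qed.

Lemma peval_add (p q : list Q) (x : R) : peval (padd p q) x = peval p x + peval q x.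
Proof.
  revert q; induction p as [|a p IH]; intros [|b q]; cbn [peval padd]; try ring.
  rewrite IH, Q2R_Qred, Q2R_plus; ring.
Qed.

Lemma peval_scal (c : Q) (p : list Q) (x : R) : peval (pscal c p) x = Q2R c * peval p x.
Proof.
  induction p as [|a p IH]; cbn [peval pscal map]; try ring.
  unfold pscal in IH; rewrite IH, Q2R_Qred, Q2R_mult; ring.
Qed.

Lemma peval_mul (p q : list Q) (x : R) : peval (pmul p q) x = peval p x * peval q x.
Proof.
  induction p as [|a p IH]; cbn [peval pmul]; try ring.
  rewrite peval_add, peval_scal; cbn [peval]; rewrite IH, RMicromega.Q2R_0; ring.
Qed.

Lemma peval_sub (p q : list Q) (x : R) : peval (psub p q) x = peval p x - peval q x.
Proof.
  unfold psub; rewrite peval_add, peval_scal.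
  replace (Q2R (-1)) with (-1) by (unfold Q2R; simpl; field); ring.
Qed.

Lemma peval_pow (p : list Q) (n : nat) (x : R) : peval (ppow p n) x = peval p x ^ n.
Proof.
  induction n as [|n IH]; cbn [ppow peval pow].
  - rewrite RMicromega.Q2R_1; ring.
  - rewrite peval_mul, IH; ring.
Qed.

Lemma peval_pzerob (p : list Q) (x : R) : pzerob p = true -> peval p x = 0.
Proof.
  induction p as [|a p IH]; cbn [peval pzerob forallb]; auto.
  intros [Ha Hp]%andb_prop.
  rewrite (RMicromega.Qeq_true _ _ Ha), IH, RMicromega.Q2R_0 by exact Hp; ring.
Qed.

Lemma peval_eq_of_pzerob (p q : list Q) (x : R) :
  pzerob (psub p q) = true -> peval p x = peval q x.
Proof. intros H; apply (peval_pzerob _ x) in H; rewrite peval_sub in H; lra. Qed.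

Lemma is_derive_peval (p : list Q) (x : R) : is_derive (peval p) x (peval (pder p) x).
Proof.
  induction p as [|a p IH]; cbn [peval pder].
  - exact (is_derive_const _ x).
  - rewrite peval_add; cbn [peval]; rewrite RMicromega.Q2R_0.
    auto_derive; [exact (ex_intro _ _ IH) |].
    erewrite is_derive_unique by exact IH; ring.
Qed.

Lemma is_derive_peval_ext (p : list Q) (f : R -> R) (x : R) :
  (forall y, peval p y = f y) -> is_derive f x (peval (pder p) x).
Proof. intros Hf; apply (is_derive_ext (peval p)); [exact Hf | apply is_derive_peval]. Qed.

Lemma continuous_peval (p : list Q) (x : R) : continuous (peval p) x.
Proof.
  apply (ex_derive_continuous (peval p)); exists (peval (pder p) x); apply is_derive_peval.
Qed.

Lemma Q2R_lit (n : Z) (d : positive) : Q2R (n # d) = IZR n / IZR (Zpos d).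
Proof. reflexivity. Qed.

(** * Real analysis near a point *)

Lemma locally_0_iff (P : R -> Prop) :
  locally 0 P <-> exists delta, 0 < delta /\ forall x, Rabs x < delta -> P x.
Proof.
  split.
  - intros [[d Hd] H]; exists d; split; [exact Hd|]; intros x Hx; apply H.
    change (Rabs (x - 0) < d); rewrite Rminus_0_r; exact Hx.
  - intros (d & Hd & H); exists (mkposreal d Hd); intros x Hx; apply H.
    change (Rabs (x - 0) < d) in Hx; rewrite Rminus_0_r in Hx; exact Hx.
Qed.

Lemma locally_0_near (f : R -> R) (eps : R) :
  continuous f 0 -> 0 < eps -> locally 0 (fun x => Rabs (f x - f 0) < eps).
Proof.
  intros Hf Heps; generalize (proj1 (filterlim_locally f (f 0)) Hf (mkposreal _ Heps)).
  apply filter_imp; intros x Hx; exact Hx.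
Qed.

Lemma locally_0_lt (f : R -> R) (a : R) : continuous f 0 -> a < f 0 -> locally 0 (fun x => a < f x).
Proof.
  intros Hf Ha; generalize (locally_0_near f (f 0 - a) Hf ltac:(lra)).
  apply filter_imp; intros x Hx.
  pose proof (Rle_abs (f 0 - f x)); rewrite Rabs_minus_sym in Hx; lra.
Qed.

Lemma locally_0_abs_le_of_is_derive (f : R -> R) (l : R) :
  is_derive f 0 l -> f 0 = 0 -> locally 0 (fun x => Rabs (f x) <= (Rabs l + 1) * Rabs x).
Proof.
  intros Hd H0; apply is_derive_Reals in Hd.
  destruct (Hd 1 Rlt_0_1) as [[d Hdpos] Hlin].
  apply locally_0_iff; exists d; split; [exact Hdpos|]; intros x Hx.
  destruct (Req_dec x 0) as [->|Hx0].
  { rewrite H0, Rabs_R0; lra. }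
  specialize (Hlin x Hx0 Hx); rewrite Rplus_0_l, H0, Rminus_0_r in Hlin.
  replace (f x) with ((f x / x - l) * x + l * x) by (field; exact Hx0).
  eapply Rle_trans; [apply Rabs_triang|]; rewrite !Rabs_mult.
  assert (Rabs (f x / x - l) * Rabs x <= 1 * Rabs x)
    by (apply Rmult_le_compat_r; [apply Rabs_pos | lra]).
  lra.
Qed.

Lemma is_derive_Rmult (f g : R -> R) (x df dg : R) :
  is_derive f x df -> is_derive g x dg -> is_derive (fun y => f y * g y) x (df * g x + f x * dg).
Proof. intros Hf Hg; apply (is_derive_mult f g); [exact Hf | exact Hg | apply Rmult_comm]. Qed.

Lemma is_derive_Rpower_comp (f : R -> R) (x df c : R) :
  0 < f x -> is_derive f x df ->
  is_derive (fun y => Rpower (f y) c) x (c * (df / f x) * Rpower (f x) c).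
Proof.
  intros Hpos Hd; unfold Rpower.
  replace (c * (df / f x) * exp (c * ln (f x))) with (df * (c * / f x * exp (c * ln (f x))))
    by (field; lra).
  apply (is_derive_comp (fun u => exp (c * ln u)) f); [|exact Hd].
  auto_derive; [exact Hpos | ring].
Qed.

Lemma Rpower_1_l (y : R) : Rpower 1 y = 1.
Proof. unfold Rpower; rewrite ln_1, Rmult_0_r; apply exp_0. Qed.

Lemma Rpower_opp_INR (a : R) (k : nat) : 0 < a -> Rpower a (- INR k) = / a ^ k.
Proof. intros Ha; rewrite Rpower_Ropp, Rpower_pow by exact Ha; reflexivity. Qed.

Lemma ratio_nonincreasing (V dV : R -> R) (a b : R) :
  0 < a < b ->
  (forall x, a <= x <= b -> is_derive V x (dV x)) ->
  (forall x, a <= x <= b -> x * dV x <= V x) ->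
  V b / b <= V a / a.
Proof.
  intros Hab Hd Hsub.
  destruct (MVT_cor2 (fun y => V y / y) (fun y => (dV y * y - V y * 1) / y ^ 2) a b)
    as [c [Hc Hcab]]; [lra| |].
  - intros c Hc; apply is_derive_Reals.
    apply (is_derive_div V (fun y => y)); [apply Hd; lra | | lra].
    apply (is_derive_id (K := R_AbsRing)).
  - assert ((dV c * c - V c * 1) / c ^ 2 <= 0).
    { apply Rmult_le_0_r; [specialize (Hsub c ltac:(lra)); lra |].
      apply Rlt_le, Rinv_0_lt_compat, pow_lt; lra. }
    assert (V b / b - V a / a <= 0) by (rewrite Hc; apply Rmult_le_0_r; lra).
    lra.
Qed.

Lemma le0_of_le_linear (v C x0 : R) : 0 < x0 -> (forall t, 0 < t < x0 -> v <= C * t) -> v <= 0.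
Proof.
  intros Hx0 H; apply Rnot_lt_le; intros Hv.
  set (t := Rmin (x0 / 2) (v / (2 * (Rabs C + 1)))).
  assert (HC : 0 < Rabs C + 1) by (pose proof (Rabs_pos C); lra).
  assert (Ht : 0 < t).
  { apply Rmin_pos; [lra | apply Rdiv_lt_0_compat; lra]. }
  assert (Ht' : t <= v / (2 * (Rabs C + 1))) by apply Rmin_r.
  assert (Htx : t < x0) by (apply Rle_lt_trans with (x0 / 2); [apply Rmin_l | lra]).
  specialize (H t (conj Ht Htx)).
  assert (C * t <= (Rabs C + 1) * t)
    by (apply Rmult_le_compat_r; [lra | pose proof (Rle_abs C); lra]).
  assert ((Rabs C + 1) * t <= v / 2).
  { apply Rle_trans with ((Rabs C + 1) * (v / (2 * (Rabs C + 1)))).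
    - apply Rmult_le_compat_l; lra.
    - right; field; lra. }
  lra.
Qed.

(* [theta V <= V] makes [V x / x] nonincreasing, while [V = O(x^2)] makes it tend to [0]. *)
Lemma theta_subsolution_eq0 (V dV : R -> R) (delta C : R) :
  (forall x, 0 < x < delta -> is_derive V x (dV x)) ->
  (forall x, 0 < x < delta -> x * dV x <= V x) ->
  (forall x, 0 < x < delta -> 0 <= V x) ->
  (forall x, 0 < x < delta -> V x <= C * x ^ 2) ->
  forall x, 0 < x < delta -> V x = 0.
Proof.
  intros Hd Hsub Hpos Hquad x Hx.
  assert (V x / x <= 0).
  { apply (le0_of_le_linear _ C x); [lra|]; intros t Ht.
    apply Rle_trans with (V t / t).
    - apply ratio_nonincreasing with dV; [lra | intros; apply Hd; lra | intros; apply Hsub; lra].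
    - apply (Rmult_le_reg_r t); [lra|].
      unfold Rdiv; rewrite Rmult_assoc, Rinv_l by lra.
      specialize (Hquad t ltac:(lra)); cbn in Hquad; lra. }
  specialize (Hpos x Hx).
  assert (V x <= 0).
  { replace (V x) with (V x / x * x) by (field; lra).
    apply Rmult_le_0_r; lra. }
  lra.
Qed.

Lemma lin3_abs_le (c0 c1 c2 x0 x1 x2 K : R) :
  Rabs c0 <= K -> Rabs c1 <= K -> Rabs c2 <= K ->
  Rabs (c0 * x0 + c1 * x1 + c2 * x2) <= K * (Rabs x0 + Rabs x1 + Rabs x2).
Proof.
  intros H0 H1 H2.
  assert (forall c y, Rabs c <= K -> Rabs (c * y) <= K * Rabs y)
    by (intros c y Hc; rewrite Rabs_mult; apply Rmult_le_compat_r; [apply Rabs_pos | exact Hc]).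
  pose proof (Rabs_triang (c0 * x0 + c1 * x1) (c2 * x2)).
  pose proof (Rabs_triang (c0 * x0) (c1 * x1)).
  pose proof (H c0 x0 H0); pose proof (H c1 x1 H1); pose proof (H c2 x2 H2).
  lra.
Qed.

Lemma dot3_le (y0 y1 y2 w0 w1 w2 B : R) :
  Rabs w0 <= B -> Rabs w1 <= B -> Rabs w2 <= B ->
  y0 * w0 + y1 * w1 + y2 * w2 <= (Rabs y0 + Rabs y1 + Rabs y2) * B.
Proof.
  intros H0 H1 H2.
  assert (forall y w, Rabs w <= B -> y * w <= Rabs y * B).
  { intros y w Hw; eapply Rle_trans; [apply Rle_abs|].
    rewrite Rabs_mult; apply Rmult_le_compat_l; [apply Rabs_pos | exact Hw]. }
  pose proof (H y0 w0 H0); pose proof (H y1 w1 H1); pose proof (H y2 w2 H2).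
  lra.
Qed.

Lemma sum_abs_sqr_le (y0 y1 y2 : R) :
  (Rabs y0 + Rabs y1 + Rabs y2) ^ 2 <= 3 * (y0 ^ 2 + y1 ^ 2 + y2 ^ 2).
Proof.
  rewrite <- (pow2_abs y0), <- (pow2_abs y1), <- (pow2_abs y2).
  pose proof (pow2_ge_0 (Rabs y0 - Rabs y1)); pose proof (pow2_ge_0 (Rabs y1 - Rabs y2)).
  pose proof (pow2_ge_0 (Rabs y0 - Rabs y2)).
  nra.
Qed.

(** * The hypergeometric series and its differential equation *)

Lemma poch_pos (b : R) (n : nat) : 0 < b -> 0 < poch b n.
Proof.
  intros Hb; induction n as [|n IH]; cbn [poch]; [lra|].
  apply Rmult_lt_0_compat; [exact IH | pose proof (pos_INR n); lra].
Qed.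

Definition moderate_params (a1 a2 a3 b1 b2 : R) : Prop :=
  Rabs a1 <= 11/10 /\ Rabs a2 <= 11/10 /\ Rabs a3 <= 11/10 /\ 1/2 <= b1 /\ 1/2 <= b2.

Section Hypergeometric.

Variables a1 a2 a3 b1 b2 : R.

Let c := coef3F2 a1 a2 a3 b1 b2.

Lemma coef3F2_0 : c 0 = 1.
Proof. unfold c, coef3F2; cbn; field. Qed.

Lemma coef3F2_S (n : nat) : 0 < b1 -> 0 < b2 ->
  c (S n) * ((INR n + 1) * (b1 + INR n) * (b2 + INR n)) =
  c n * ((a1 + INR n) * (a2 + INR n) * (a3 + INR n)).
Proof.
  intros Hb1 Hb2; unfold c, coef3F2; cbn [poch Factorial.fact].
  rewrite mult_INR, S_INR.
  pose proof (poch_pos b1 n Hb1); pose proof (poch_pos b2 n Hb2).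
  pose proof (lt_0_INR _ (Factorial.lt_O_fact n)); pose proof (pos_INR n).
  field; repeat split; lra.
Qed.

Hypothesis Hparams : moderate_params a1 a2 a3 b1 b2.

Lemma coef3F2_bound (n : nat) : Rabs (c n) <= 8 ^ n.
Proof.
  destruct Hparams as (Ha1 & Ha2 & Ha3 & Hb1 & Hb2).
  induction n as [|n IH].
  - rewrite coef3F2_0, Rabs_R1; cbn; lra.
  - pose proof (pos_INR n) as Hn.
    set (den := (INR n + 1) * (b1 + INR n) * (b2 + INR n)).
    assert (Hden : 0 < den) by (unfold den; repeat apply Rmult_lt_0_compat; lra).
    assert (Hshift : forall a, Rabs a <= 11/10 -> Rabs (a + INR n) <= INR n + 11/10).
    { intros a Ha; eapply Rle_trans; [apply Rabs_triang|rewrite (Rabs_right (INR n)); lra]. }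
    (* (n + 11/10)^3 <= 8 (n + 1) (n + 1/2)^2 *)
    assert (Hnum : Rabs ((a1 + INR n) * (a2 + INR n) * (a3 + INR n)) <= 8 * den).
    { rewrite !Rabs_mult.
      apply Rle_trans with ((INR n + 11/10) * (INR n + 11/10) * (INR n + 11/10)).
      { repeat apply Rmult_le_compat; auto using Rabs_pos, Rmult_le_pos. }
      unfold den; apply Rle_trans with (8 * ((INR n + 1) * (INR n + 1/2) * (INR n + 1/2))); [nra|].
      apply Rmult_le_compat_l; [lra|]; apply Rmult_le_compat; nra. }
    apply (Rmult_le_reg_r den); [exact Hden|].
    rewrite <- (Rabs_right den) at 1 by lra.
    rewrite <- Rabs_mult; unfold den; rewrite coef3F2_S by lra; fold den.
    rewrite Rabs_mult; cbn [pow].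
    apply Rle_trans with (8 ^ n * (8 * den)); [apply Rmult_le_compat; auto using Rabs_pos | lra].
Qed.

(* [theta_coef k] is the coefficient sequence of [theta^k 3F2], where [theta = z d/dz]. *)
Definition theta_coef (k n : nat) : R := INR n ^ k * c n.

Definition theta3F2 (k : nat) (z : R) : R := PSeries (theta_coef k) z.

Lemma theta_coef_S (k n : nat) :
  theta_coef (S k) n = PS_incr_1 (PS_derive (theta_coef k)) n.
Proof. unfold theta_coef, PS_derive, PS_incr_1; destruct n; cbn; [unfold zero; cbn|]; ring. Qed.

Lemma CV_radius_theta_coef (k : nat) : Rbar_le (1/16) (CV_radius (theta_coef k)).
Proof.
  induction k as [|k IH].
  - rewrite (CV_radius_ext _ c) by (intros n; unfold theta_coef; cbn; ring).
    apply (proj1 (Lub_Rbar_correct (CV_disk c))).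
    apply (@ex_series_le R_AbsRing R_CompleteNormedModule _ (fun n => (1/2) ^ n)).
    + intros n; change norm with Rabs; rewrite Rabs_Rabsolu, Rabs_mult.
      rewrite (Rabs_right ((1/16) ^ n)) by (apply Rle_ge, pow_le; lra).
      apply Rle_trans with (8 ^ n * (1/16) ^ n).
      * apply Rmult_le_compat_r; [apply pow_le; lra | apply coef3F2_bound].
      * rewrite <- Rpow_mult_distr; right; f_equal; lra.
    + apply ex_series_geom; rewrite Rabs_right; lra.
  - rewrite (CV_radius_ext _ _ (theta_coef_S k)), CV_radius_incr_1, CV_radius_derive.
    exact IH.
Qed.

Lemma lt_CV_radius_theta_coef (k : nat) (z : R) :
  Rabs z < 1/16 -> Rbar_lt (Rabs z) (CV_radius (theta_coef k)).
Proof.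
  intros Hz; apply (Rbar_lt_le_trans _ (1/16)); [exact Hz | apply CV_radius_theta_coef].
Qed.

Lemma ex_pseries_theta_coef (k : nat) (z : R) : Rabs z < 1/16 -> ex_pseries (theta_coef k) z.
Proof. intros Hz; apply CV_radius_inside, lt_CV_radius_theta_coef, Hz. Qed.

Lemma is_derive_theta3F2 (k : nat) (z : R) : Rabs z < 1/16 ->
  exists d, is_derive (theta3F2 k) z d /\ z * d = theta3F2 (S k) z.
Proof.
  intros Hz; exists (PSeries (PS_derive (theta_coef k)) z); split.
  - apply is_derive_PSeries, lt_CV_radius_theta_coef, Hz.
  - unfold theta3F2; rewrite (PSeries_ext _ _ _ (theta_coef_S k)), PSeries_incr_1.
    reflexivity.
Qed.

Lemma theta3F2_at_0 (k : nat) : theta3F2 k 0 = match k with O => 1 | S _ => 0 end.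
Proof.
  unfold theta3F2; rewrite PSeries_0; unfold theta_coef; rewrite coef3F2_0.
  destruct k; cbn; ring.
Qed.

(* The hypergeometric equation
   [theta (theta + b1 - 1) (theta + b2 - 1) F = z (theta + a1) (theta + a2) (theta + a3) F]. *)
Lemma theta3F2_equation (z : R) : Rabs z < 1/16 ->
  let e1 := (b1 - 1) + (b2 - 1) in let e2 := (b1 - 1) * (b2 - 1) in
  let q1 := a1 + a2 + a3 in let q2 := a1 * a2 + a1 * a3 + a2 * a3 in
  let q3 := a1 * a2 * a3 in
  theta3F2 3 z + e1 * theta3F2 2 z + e2 * theta3F2 1 z =
  z * (theta3F2 3 z + q1 * theta3F2 2 z + q2 * theta3F2 1 z + q3 * theta3F2 0 z).
Proof.
  intros Hz e1 e2 q1 q2 q3.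
  assert (Hex : forall k, ex_pseries (theta_coef k) z) by (intros; apply ex_pseries_theta_coef, Hz).
  assert (Hsc : forall r k, ex_pseries (PS_scal r (theta_coef k)) z)
    by (intros; apply ex_pseries_scal; [apply Rmult_comm | apply Hex]).
  unfold theta3F2.
  rewrite <- !PSeries_scal, <- !PSeries_plus by auto using ex_pseries_plus.
  rewrite <- PSeries_incr_1.
  apply PSeries_ext; intros [|n]; unfold PS_plus, PS_scal, PS_incr_1, theta_coef;
    change plus with Rplus; change scal with Rmult.
  - cbn; unfold zero; cbn; ring.
  - destruct Hparams as (_ & _ & _ & Hb1 & Hb2).
    rewrite S_INR.
    transitivity (c (S n) * ((INR n + 1) * (b1 + INR n) * (b2 + INR n))); [unfold e1, e2; ring|].
    rewrite coef3F2_S by lra; unfold q1, q2, q3; ring.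
Qed.

Lemma is_3F2_theta3F2 (z : R) : Rabs z < 1/16 ->
  is_3F2 a1 a2 a3 b1 b2 z (theta3F2 0 z).
Proof.
  intros Hz; apply is_series_Reals.
  eapply is_series_ext; [|exact (PSeries_correct _ _ (ex_pseries_theta_coef 0 z Hz))].
  intros n; unfold theta_coef, c; cbn; rewrite pow_n_pow; ring.
Qed.

End Hypergeometric.

(** * Uniqueness at a regular singular point *)

(* [theta d = A d] at [x], where [theta = x d/dx], [d = (d0, d1, d2)] and
   [A = [[0, m, 0], [0, 0, m], [r0, r1, r2]]]. *)

Definition theta_system (m r0 r1 r2 d0 d1 d2 : R -> R) (x : R) : Prop :=
  exists D0 D1 D2 : R,
    is_derive d0 x D0 /\ is_derive d1 x D1 /\ is_derive d2 x D2 /\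
    x * D0 = m x * d1 x /\ x * D1 = m x * d2 x /\
    x * D2 = r0 x * d0 x + r1 x * d1 x + r2 x * d2 x.

Lemma theta_system_minus (m r0 r1 r2 u0 u1 u2 v0 v1 v2 : R -> R) (x : R) :
  theta_system m r0 r1 r2 u0 u1 u2 x -> theta_system m r0 r1 r2 v0 v1 v2 x ->
  theta_system m r0 r1 r2 (fun y => u0 y - v0 y) (fun y => u1 y - v1 y) (fun y => u2 y - v2 y) x.
Proof.
  intros (A0 & A1 & A2 & HA0 & HA1 & HA2 & EA0 & EA1 & EA2)
    (B0 & B1 & B2 & HB0 & HB1 & HB2 & EB0 & EB1 & EB2).
  exists (A0 - B0), (A1 - B1), (A2 - B2); cbv beta.
  split; [apply (is_derive_minus u0 v0); assumption|].
  split; [apply (is_derive_minus u1 v1); assumption|].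
  split; [apply (is_derive_minus u2 v2); assumption|].
  rewrite !Rmult_minus_distr_l, EA0, EB0, EA1, EB1, EA2, EB2; repeat split; ring.
Qed.

(* [theta = x d/dx] commutes with [x |-> -x]. *)
Lemma theta_system_opp (m r0 r1 r2 d0 d1 d2 : R -> R) (x : R) :
  theta_system m r0 r1 r2 d0 d1 d2 (- x) ->
  theta_system (fun y => m (- y)) (fun y => r0 (- y)) (fun y => r1 (- y)) (fun y => r2 (- y))
    (fun y => d0 (- y)) (fun y => d1 (- y)) (fun y => d2 (- y)) x.
Proof.
  intros (D0 & D1 & D2 & H0 & H1 & H2 & E0 & E1 & E2).
  assert (Hopp : forall f D, is_derive f (- x) D -> is_derive (fun y => f (- y)) x (- D)).
  { intros f D Hf; auto_derive; [exists D; exact Hf|].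
    erewrite is_derive_unique by exact Hf; ring. }
  exists (- D0), (- D1), (- D2); cbv beta.
  do 3 (split; [apply Hopp; assumption|]).
  repeat split; [rewrite <- E0 | rewrite <- E1 | rewrite <- E2]; ring.
Qed.

Definition admissible_exponents (be1 be2 : R) : Prop :=
  -3/7 <= be1 /\ -3/7 <= be2 /\ Rabs be1 <= 1 /\ Rabs be2 <= 1 /\
  1/7 <= Rabs (be2 - be1) /\ 1/25 <= Rabs (be1 * be2).

Section ThetaSystemUniqueness.

Variables be1 be2 : R.

Hypothesis Hbe1 : -3/7 <= be1.

Hypothesis Hbe2 : -3/7 <= be2.

Hypothesis Hbe1_abs : Rabs be1 <= 1.

Hypothesis Hbe2_abs : Rabs be2 <= 1.

Hypothesis Hgap : 1/7 <= Rabs (be2 - be1).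

Hypothesis Hprod : 1/25 <= Rabs (be1 * be2).

(* Coordinates along the left eigenvectors of the companion matrix
   [[0, 1, 0], [0, 0, 1], [0, -be1 be2, -(be1 + be2)]], for the eigenvalues [0, -be1, -be2]. *)
Definition ycoord0 (d0 d1 d2 : R) : R := be1 * be2 * d0 + (be1 + be2) * d1 + d2.

Definition ycoord1 (d1 d2 : R) : R := be2 * d1 + d2.

Definition ycoord2 (d1 d2 : R) : R := be1 * d1 + d2.

Definition energy (d0 d1 d2 : R) : R :=
  ycoord0 d0 d1 d2 ^ 2 + ycoord1 d1 d2 ^ 2 + ycoord2 d1 d2 ^ 2.

Lemma abs_be_sum_le : Rabs (be1 + be2) <= 2.
Proof. pose proof (Rabs_triang be1 be2); lra. Qed.

Lemma abs_be_prod_le : Rabs (be1 * be2) <= 1.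
Proof.
  rewrite Rabs_mult; rewrite <- (Rmult_1_r 1).
  apply Rmult_le_compat; auto using Rabs_pos.
Qed.

Lemma sum_abs_le_ycoords (d0 d1 d2 : R) :
  Rabs d0 + Rabs d1 + Rabs d2 <=
  590 * (Rabs (ycoord0 d0 d1 d2) + Rabs (ycoord1 d1 d2) + Rabs (ycoord2 d1 d2)).
Proof.
  unfold ycoord0, ycoord1, ycoord2.
  set (y0 := be1 * be2 * d0 + (be1 + be2) * d1 + d2).
  set (y1 := be2 * d1 + d2); set (y2 := be1 * d1 + d2).
  pose proof (Rabs_pos y0); pose proof (Rabs_pos y1); pose proof (Rabs_pos y2).
  pose proof abs_be_sum_le.
  assert (Hd1 : Rabs d1 <= 7 * (Rabs y1 + Rabs y2)).
  { assert (Rabs (be2 - be1) * Rabs d1 <= Rabs y1 + Rabs y2).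
    { rewrite <- Rabs_mult; replace ((be2 - be1) * d1) with (y1 + - y2) by (unfold y1, y2; ring).
      rewrite <- (Rabs_Ropp y2); apply Rabs_triang. }
    assert (1/7 * Rabs d1 <= Rabs (be2 - be1) * Rabs d1)
      by (apply Rmult_le_compat_r; [apply Rabs_pos | exact Hgap]).
    lra. }
  assert (Hd2 : Rabs d2 <= Rabs y1 + Rabs d1).
  { replace d2 with (y1 + - (be2 * d1)) by (unfold y1; ring).
    eapply Rle_trans; [apply Rabs_triang|]; rewrite Rabs_Ropp, Rabs_mult.
    assert (Rabs be2 * Rabs d1 <= 1 * Rabs d1) by (apply Rmult_le_compat_r; auto using Rabs_pos).
    lra. }
  assert (Hd0 : Rabs d0 <= 25 * (Rabs y0 + 2 * Rabs d1 + Rabs d2)).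
  { assert (Rabs (be1 * be2) * Rabs d0 <= Rabs y0 + 2 * Rabs d1 + Rabs d2).
    { rewrite <- Rabs_mult.
      replace (be1 * be2 * d0) with (y0 + - ((be1 + be2) * d1) + - d2) by (unfold y0; ring).
      pose proof (Rabs_triang (y0 + - ((be1 + be2) * d1)) (- d2)).
      pose proof (Rabs_triang y0 (- ((be1 + be2) * d1))).
      rewrite !Rabs_Ropp, Rabs_mult in *.
      assert (Rabs (be1 + be2) * Rabs d1 <= 2 * Rabs d1)
        by (apply Rmult_le_compat_r; auto using Rabs_pos).
      lra. }
    assert (1/25 * Rabs d0 <= Rabs (be1 * be2) * Rabs d0)
      by (apply Rmult_le_compat_r; [apply Rabs_pos | exact Hprod]).
    lra. }
  lra.
Qed.

Lemma energy_le (d0 d1 d2 : R) : energy d0 d1 d2 <= 12 * (Rabs d0 + Rabs d1 + Rabs d2) ^ 2.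
Proof.
  set (S := Rabs d0 + Rabs d1 + Rabs d2).
  assert (HS : 0 <= S) by (unfold S; pose proof (Rabs_pos d0); pose proof (Rabs_pos d1);
                           pose proof (Rabs_pos d2); lra).
  assert (Hsq : forall y, Rabs y <= 2 * S -> y ^ 2 <= 4 * S ^ 2)
    by (intros y Hy; rewrite <- pow2_abs; pose proof (Rabs_pos y); nra).
  assert (H0 : Rabs 0 <= 2) by (rewrite Rabs_R0; lra).
  assert (H1 : Rabs 1 <= 2) by (rewrite Rabs_R1; lra).
  assert (Hy0 : Rabs (ycoord0 d0 d1 d2) <= 2 * S).
  { replace (ycoord0 d0 d1 d2) with (be1 * be2 * d0 + (be1 + be2) * d1 + 1 * d2)
      by (unfold ycoord0; ring).
    apply lin3_abs_le; [pose proof abs_be_prod_le; lra | apply abs_be_sum_le | exact H1]. }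
  assert (Hy1 : Rabs (ycoord1 d1 d2) <= 2 * S).
  { replace (ycoord1 d1 d2) with (0 * d0 + be2 * d1 + 1 * d2) by (unfold ycoord1; ring).
    apply lin3_abs_le; lra. }
  assert (Hy2 : Rabs (ycoord2 d1 d2) <= 2 * S).
  { replace (ycoord2 d1 d2) with (0 * d0 + be1 * d1 + 1 * d2) by (unfold ycoord2; ring).
    apply lin3_abs_le; lra. }
  unfold energy; pose proof (Hsq _ Hy0); pose proof (Hsq _ Hy1); pose proof (Hsq _ Hy2); lra.
Qed.

Lemma energy_theta_le (d0 d1 d2 m r0 r1 r2 eta : R) :
  eta <= 1/200000 ->
  Rabs (m - 1) <= eta -> Rabs r0 <= eta ->
  Rabs (r1 + be1 * be2) <= eta -> Rabs (r2 + (be1 + be2)) <= eta ->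
  let t2 := r0 * d0 + r1 * d1 + r2 * d2 in
  2 * (ycoord0 d0 d1 d2 * ycoord0 (m * d1) (m * d2) t2
       + ycoord1 d1 d2 * ycoord1 (m * d2) t2 + ycoord2 d1 d2 * ycoord2 (m * d2) t2)
  <= energy d0 d1 d2.
Proof.
  intros Heta Hm Hr0 Hr1 Hr2 t2.
  set (mu := m - 1) in *; set (rho1 := r1 + be1 * be2) in *; set (rho2 := r2 + (be1 + be2)) in *.
  set (S := Rabs d0 + Rabs d1 + Rabs d2).
  set (y0 := ycoord0 d0 d1 d2); set (y1 := ycoord1 d1 d2); set (y2 := ycoord2 d1 d2).
  set (w0 := r0 * d0 + (be1 * be2 * mu + rho1) * d1 + ((be1 + be2) * mu + rho2) * d2).
  set (w1 := r0 * d0 + rho1 * d1 + (be2 * mu + rho2) * d2).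
  set (w2 := r0 * d0 + rho1 * d1 + (be1 * mu + rho2) * d2).
  (* in eigen-coordinates the system is diagonal up to the small perturbation [w] *)
  assert (Hdiag : 2 * (y0 * ycoord0 (m * d1) (m * d2) t2 + y1 * ycoord1 (m * d2) t2
                       + y2 * ycoord2 (m * d2) t2)
                  = - 2 * be1 * y1 ^ 2 - 2 * be2 * y2 ^ 2 + 2 * (y0 * w0 + y1 * w1 + y2 * w2)).
  { unfold y0, y1, y2, w0, w1, w2, t2, mu, rho1, rho2, ycoord0, ycoord1, ycoord2; ring. }
  rewrite Hdiag.
  assert (Hpert : forall a A, Rabs a <= A -> Rabs (a * mu + rho2) <= A * eta + eta).
  { intros a A Ha; eapply Rle_trans; [apply Rabs_triang|]; rewrite Rabs_mult.
    pose proof (Rabs_pos a); pose proof (Rabs_pos mu); nra. }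
  pose proof (Rabs_pos r0).
  assert (Hw : Rabs w0 <= 3 * eta * S /\ Rabs w1 <= 3 * eta * S /\ Rabs w2 <= 3 * eta * S).
  { assert (Rabs (be1 * be2 * mu + rho1) <= 3 * eta).
    { eapply Rle_trans; [apply Rabs_triang|]; rewrite Rabs_mult.
      pose proof abs_be_prod_le; pose proof (Rabs_pos (be1 * be2)); pose proof (Rabs_pos mu); nra. }
    pose proof (Hpert _ _ abs_be_sum_le); pose proof (Hpert _ _ Hbe1_abs);
      pose proof (Hpert _ _ Hbe2_abs).
    unfold S; repeat split; apply lin3_abs_le; lra. }
  destruct Hw as (Hw0 & Hw1 & Hw2).
  pose proof (sum_abs_le_ycoords d0 d1 d2) as HSy; fold y0 y1 y2 S in HSy.
  pose proof (sum_abs_sqr_le y0 y1 y2).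
  pose proof (dot3_le y0 y1 y2 w0 w1 w2 _ Hw0 Hw1 Hw2).
  set (Sy := Rabs y0 + Rabs y1 + Rabs y2) in *.
  assert (0 <= Sy) by (unfold Sy; pose proof (Rabs_pos y0); pose proof (Rabs_pos y1);
                        pose proof (Rabs_pos y2); lra).
  assert (Sy * (3 * eta * S) <= 1770 * eta * Sy ^ 2).
  { apply Rle_trans with (Sy * (3 * eta * (590 * Sy))); [|right; ring].
    apply Rmult_le_compat_l; [lra|]; apply Rmult_le_compat_l; lra. }
  assert (0 <= y1 ^ 2) by apply pow2_ge_0; assert (0 <= y2 ^ 2) by apply pow2_ge_0.
  assert (0 <= y0 ^ 2) by apply pow2_ge_0.
  unfold energy; fold y0 y1 y2; nra.
Qed.

Lemma theta_system_eq0_right (m r0 r1 r2 d0 d1 d2 : R -> R) (delta C eta : R) :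
  eta <= 1/200000 ->
  (forall x, 0 < x < delta ->
     theta_system m r0 r1 r2 d0 d1 d2 x /\
     Rabs (m x - 1) <= eta /\ Rabs (r0 x) <= eta /\
     Rabs (r1 x + be1 * be2) <= eta /\ Rabs (r2 x + (be1 + be2)) <= eta /\
     Rabs (d0 x) + Rabs (d1 x) + Rabs (d2 x) <= C * x) ->
  forall x, 0 < x < delta -> d0 x = 0 /\ d1 x = 0 /\ d2 x = 0.
Proof.
  intros Heta H.
  set (V := fun x => energy (d0 x) (d1 x) (d2 x)).
  assert (HV : forall x, 0 < x < delta -> is_derive V x (Derive V x) /\ x * Derive V x <= V x).
  { intros x Hx.
    destruct (H x Hx) as ((D0 & D1 & D2 & H0 & H1 & H2 & E0 & E1 & E2) & Hm & Hr0 & Hr1 & Hr2 & _).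
    set (y0 := ycoord0 (d0 x) (d1 x) (d2 x)); set (y1 := ycoord1 (d1 x) (d2 x));
      set (y2 := ycoord2 (d1 x) (d2 x)).
    assert (DV : is_derive V x (2 * (y0 * ycoord0 D0 D1 D2 + y1 * ycoord1 D1 D2
                                     + y2 * ycoord2 D1 D2))).
    { unfold V, energy, y0, y1, y2, ycoord0, ycoord1, ycoord2.
      auto_derive; [repeat split; eexists; eassumption|].
      erewrite !is_derive_unique by eassumption; ring. }
    rewrite (is_derive_unique _ _ _ DV); split; [exact DV|].
    replace (x * _) with (2 * (y0 * ycoord0 (x * D0) (x * D1) (x * D2)
                               + y1 * ycoord1 (x * D1) (x * D2) + y2 * ycoord2 (x * D1) (x * D2)))
      by (unfold ycoord0, ycoord1, ycoord2; ring).
    rewrite E0, E1, E2; apply (energy_theta_le _ _ _ _ _ _ _ eta); assumption. }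
  assert (HV0 : forall x, 0 < x < delta -> V x = 0).
  { apply (theta_subsolution_eq0 V (Derive V) delta (12 * C ^ 2)); intros x Hx.
    - apply HV, Hx.
    - apply HV, Hx.
    - unfold V, energy; pose proof (pow2_ge_0 (ycoord0 (d0 x) (d1 x) (d2 x)));
        pose proof (pow2_ge_0 (ycoord1 (d1 x) (d2 x)));
        pose proof (pow2_ge_0 (ycoord2 (d1 x) (d2 x))); lra.
    - destruct (H x Hx) as (_ & _ & _ & _ & _ & HC).
      pose proof (Rabs_pos (d0 x)); pose proof (Rabs_pos (d1 x)); pose proof (Rabs_pos (d2 x)).
      apply Rle_trans with (12 * (Rabs (d0 x) + Rabs (d1 x) + Rabs (d2 x)) ^ 2);
        [apply energy_le | nra]. }
  intros x Hx; specialize (HV0 x Hx); unfold V, energy in HV0.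
  pose proof (sum_abs_le_ycoords (d0 x) (d1 x) (d2 x)) as Hinv.
  pose proof (pow2_ge_0 (ycoord0 (d0 x) (d1 x) (d2 x)));
    pose proof (pow2_ge_0 (ycoord1 (d1 x) (d2 x))); pose proof (pow2_ge_0 (ycoord2 (d1 x) (d2 x))).
  assert (ycoord0 (d0 x) (d1 x) (d2 x) = 0 /\ ycoord1 (d1 x) (d2 x) = 0 /\
          ycoord2 (d1 x) (d2 x) = 0)
    as (Z0 & Z1 & Z2) by (repeat split; nra).
  rewrite Z0, Z1, Z2, Rabs_R0 in Hinv.
  pose proof (Rabs_pos (d0 x)); pose proof (Rabs_pos (d1 x)); pose proof (Rabs_pos (d2 x)).
  repeat split; apply Rabs_eq_0; lra.
Qed.

Lemma theta_system_eq0 (m r0 r1 r2 d0 d1 d2 : R -> R) (delta C eta : R) :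
  eta <= 1/200000 ->
  (forall x, Rabs x < delta ->
     theta_system m r0 r1 r2 d0 d1 d2 x /\
     Rabs (m x - 1) <= eta /\ Rabs (r0 x) <= eta /\
     Rabs (r1 x + be1 * be2) <= eta /\ Rabs (r2 x + (be1 + be2)) <= eta /\
     Rabs (d0 x) + Rabs (d1 x) + Rabs (d2 x) <= C * Rabs x) ->
  forall x, Rabs x < delta -> d0 x = 0 /\ d1 x = 0 /\ d2 x = 0.
Proof.
  intros Heta H x Hx.
  destruct (Rtotal_order x 0) as [Hneg | [-> | Hpos]].
  - replace x with (- (- x)) by ring.
    apply (theta_system_eq0_right (fun y => m (- y)) (fun y => r0 (- y)) (fun y => r1 (- y))
             (fun y => r2 (- y)) (fun y => d0 (- y)) (fun y => d1 (- y)) (fun y => d2 (- y))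
             delta C eta Heta); [|rewrite Rabs_left in Hx; lra].
    intros t Ht.
    assert (Htabs : Rabs (- t) = t) by (rewrite Rabs_Ropp, Rabs_right; lra).
    destruct (H (- t) ltac:(lra)) as (Hsys & Hclose); rewrite Htabs in Hclose.
    split; [apply theta_system_opp; exact Hsys | exact Hclose].
  - destruct (H 0 Hx) as (_ & _ & _ & _ & _ & H0).
    rewrite Rabs_R0, Rmult_0_r in H0.
    pose proof (Rabs_pos (d0 0)); pose proof (Rabs_pos (d1 0)); pose proof (Rabs_pos (d2 0)).
    repeat split; apply Rabs_eq_0; lra.
  - apply (theta_system_eq0_right m r0 r1 r2 d0 d1 d2 delta C eta Heta);
      [|rewrite Rabs_right in Hx; lra].
    intros t Ht; assert (Htabs : Rabs t = t) by (rewrite Rabs_right; lra).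
    specialize (H t ltac:(rewrite Htabs; lra)); rewrite Htabs in H; exact H.
Qed.

Theorem theta_system_locally_eq0 (m r0 r1 r2 d0 d1 d2 : R -> R) :
  filterlim m (locally 0) (locally 1) ->
  filterlim r0 (locally 0) (locally 0) ->
  filterlim r1 (locally 0) (locally (- (be1 * be2))) ->
  filterlim r2 (locally 0) (locally (- (be1 + be2))) ->
  locally 0 (theta_system m r0 r1 r2 d0 d1 d2) ->
  d0 0 = 0 -> d1 0 = 0 -> d2 0 = 0 ->
  locally 0 (fun x => d0 x = 0).
Proof.
  intros Hm Hr0 Hr1 Hr2 Hsys H0 H1 H2.
  assert (Heta : 0 < 1/200000) by lra; set (eta := mkposreal _ Heta).
  destruct (locally_singleton _ _ Hsys) as (D0 & D1 & D2 & HD0 & HD1 & HD2 & _).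
  set (C := (Rabs D0 + 1) + (Rabs D1 + 1) + (Rabs D2 + 1)).
  assert (Hlin : locally 0 (fun x => Rabs (d0 x) + Rabs (d1 x) + Rabs (d2 x) <= C * Rabs x)).
  { generalize (locally_0_abs_le_of_is_derive _ _ HD0 H0)
      (locally_0_abs_le_of_is_derive _ _ HD1 H1) (locally_0_abs_le_of_is_derive _ _ HD2 H2).
    intros L0 L1 L2; generalize (filter_and _ _ L0 (filter_and _ _ L1 L2)).
    apply filter_imp; intros x (B0 & B1 & B2); unfold C; lra. }
  assert (Hclose : forall (f : R -> R) l, filterlim f (locally 0) (locally l) ->
                     locally 0 (fun x => Rabs (f x - l) <= eta)).
  { intros f l Hf; generalize (proj1 (filterlim_locally f l) Hf eta).
    apply filter_imp; intros x Hx; apply Rlt_le, Hx. }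
  generalize (filter_and _ _ Hsys (filter_and _ _ (Hclose _ _ Hm) (filter_and _ _ (Hclose _ _ Hr0)
    (filter_and _ _ (Hclose _ _ Hr1) (filter_and _ _ (Hclose _ _ Hr2) Hlin))))).
  intros (delta & Hdelta & Hall)%locally_0_iff.
  apply locally_0_iff; exists delta; split; [exact Hdelta|].
  intros x Hx; apply (theta_system_eq0 m r0 r1 r2 d0 d1 d2 delta C eta); [cbn; lra| |exact Hx].
  intros y Hy; destruct (Hall y Hy) as (Hs & Cm & C0 & C1 & C2 & Hb).
  rewrite Rminus_0_r in C0; unfold Rminus in C1, C2; rewrite Ropp_involutive in C1, C2.
  repeat split; assumption.
Qed.

End ThetaSystemUniqueness.

(** * The pullback [Phi3] *)

Definition Xl : list Q := [0; 1]%Q.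
Definition one_minus_Xl : list Q := [1; -1]%Q.
Definition F1l : list Q := [1; 5; -8; 1]%Q.
Definition G0l : list Q := [1; -1; 1]%Q.
Definition G1l : list Q := [1; -235; 1430; -1695; 270; 229; 1]%Q.

Ltac peval_explicit := cbn [peval]; unfold Q2R; cbn; field.

Lemma peval_Xl (x : R) : peval Xl x = x.
Proof. unfold Xl; peval_explicit. Qed.

Lemma peval_one_minus_Xl (x : R) : peval one_minus_Xl x = 1 - x.
Proof. unfold one_minus_Xl; peval_explicit. Qed.

Lemma peval_F1l (x : R) : peval F1l x = F1 x.
Proof. unfold F1l, F1; peval_explicit. Qed.

Lemma peval_G0l (x : R) : peval G0l x = G0 x.
Proof. unfold G0l, G0; peval_explicit. Qed.

Lemma peval_G1l (x : R) : peval G1l x = G1 x.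
Proof. unfold G1l, G1; peval_explicit. Qed.

Definition phil : list Q := pscal 1728 (pmul Xl (pmul [-1; 1]%Q (ppow F1l 7))).

Definition Wl : list Q := pmul (ppow G0l 3) (ppow G1l 3).

(* [Bl = (1 - x) F1 G0 G1]; for [E = (1 - x)^c0 F1^cF G0^c2 G1^c3] one has
   [E' / E = logder_num c0 cF c2 c3 / Bl]. *)
Definition Bl : list Q := pmul one_minus_Xl (pmul F1l (pmul G0l G1l)).

Definition logder_num (c0 cF c2 c3 : Q) : list Q :=
  padd (pscal (- c0) (pmul F1l (pmul G0l G1l)))
  (padd (pscal cF (pmul (pder F1l) (pmul one_minus_Xl (pmul G0l G1l))))
   (padd (pscal c2 (pmul (pder G0l) (pmul one_minus_Xl (pmul F1l G1l))))
         (pscal c3 (pmul (pder G1l) (pmul one_minus_Xl (pmul F1l G0l)))))).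

(* [Phi3 = -1728 x (1 - x) F1^7 G0^-3 G1^-3], so [x Phi3' / Phi3 = Ll / Bl]. *)
Definition Ll : list Q := padd Bl (pmul Xl (logder_num 1 7 (-3) (-3))).

Lemma peval_Bl (x : R) : peval Bl x = (1 - x) * F1 x * G0 x * G1 x.
Proof.
  unfold Bl; rewrite !peval_mul, peval_one_minus_Xl, peval_F1l, peval_G0l, peval_G1l; ring.
Qed.

Lemma peval_Wl (x : R) : peval Wl x = G0 x ^ 3 * G1 x ^ 3.
Proof. unfold Wl; rewrite peval_mul, !peval_pow, peval_G0l, peval_G1l; reflexivity. Qed.

Lemma Phi3_peval (x : R) : Phi3 x = peval phil x / peval Wl x.
Proof.
  unfold phil; rewrite peval_Wl, peval_scal, !peval_mul, peval_pow, peval_Xl, peval_F1l.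
  replace (peval [-1; 1]%Q x) with (x - 1) by peval_explicit.
  replace (Q2R 1728) with 1728 by (unfold Q2R; cbn; field).
  unfold Phi3; f_equal; ring.
Qed.

(* The Belyi-type identity [Wl - phil = Ll^2], i.e. [1 - Phi3 = Ll^2 / Wl]. *)
Lemma Wl_sub_phil_identity : pzerob (psub (psub Wl phil) (ppow Ll 2)) = true.
Proof. vm_compute; reflexivity. Qed.

Lemma theta_Phi3_identity :
  pzerob (psub (pmul Xl (pmul (psub (pmul (pder phil) Wl) (pmul phil (pder Wl))) Bl))
               (pmul phil (pmul Wl Ll))) = true.
Proof. vm_compute; reflexivity. Qed.

Lemma one_minus_Phi3 (x : R) : peval Wl x <> 0 -> 1 - Phi3 x = peval Ll x ^ 2 / peval Wl x.
Proof.
  intros HW; rewrite Phi3_peval, <- peval_pow.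
  rewrite <- (peval_eq_of_pzerob _ _ x Wl_sub_phil_identity), peval_sub; field; exact HW.
Qed.

Definition logder_Phi3 (x : R) : R := peval Ll x / peval Bl x.

Lemma theta_derive_Phi3 (x : R) : peval Wl x <> 0 -> peval Bl x <> 0 ->
  exists D, is_derive Phi3 x D /\ x * D = Phi3 x * logder_Phi3 x.
Proof.
  intros HW HB.
  exists ((peval (pder phil) x * peval Wl x - peval phil x * peval (pder Wl) x) / peval Wl x ^ 2).
  split.
  - apply (is_derive_ext (fun y => peval phil y / peval Wl y));
      [intros; symmetry; apply Phi3_peval|].
    apply (is_derive_div (peval phil) (peval Wl)); [apply is_derive_peval..|exact HW].
  - pose proof (peval_eq_of_pzerob _ _ x theta_Phi3_identity) as Hid.
    rewrite !peval_mul, peval_sub, !peval_mul, peval_Xl in Hid.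
    rewrite Phi3_peval; unfold logder_Phi3; revert Hid HW HB.
    generalize (peval (pder phil) x) (peval phil x) (peval (pder Wl) x) (peval Wl x)
      (peval Bl x) (peval Ll x); intros dp p dW W B L Hid HW HB.
    transitivity (x * ((dp * W - p * dW) * B) / (W ^ 2 * B)); [field; auto|].
    rewrite Hid; field; auto.
Qed.

Lemma F1_0 : F1 0 = 1. Proof. unfold F1; ring. Qed.
Lemma G0_0 : G0 0 = 1. Proof. unfold G0; ring. Qed.
Lemma G1_0 : G1 0 = 1. Proof. unfold G1; ring. Qed.

Lemma peval_Bl_0 : peval Bl 0 = 1.
Proof. rewrite peval_Bl, F1_0, G0_0, G1_0; ring. Qed.

Lemma peval_Ll_0 : peval Ll 0 = 1.
Proof. unfold Ll; rewrite peval_add, peval_mul, peval_Xl, peval_Bl_0; ring. Qed.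

Lemma peval_Wl_0 : peval Wl 0 = 1.
Proof. rewrite peval_Wl, G0_0, G1_0; ring. Qed.

Lemma Phi3_0 : Phi3 0 = 0.
Proof. unfold Phi3; rewrite G0_0, G1_0; field. Qed.

Lemma logder_Phi3_0 : logder_Phi3 0 = 1.
Proof. unfold logder_Phi3; rewrite peval_Ll_0, peval_Bl_0; field. Qed.

Lemma continuous_Phi3_0 : continuous Phi3 0.
Proof.
  destruct (theta_derive_Phi3 0) as (D & HD & _);
    [rewrite peval_Wl_0 | rewrite peval_Bl_0 |]; try lra.
  apply (ex_derive_continuous Phi3); exists D; exact HD.
Qed.

Lemma continuous_logder_Phi3_0 : continuous logder_Phi3 0.
Proof.
  apply (continuous_mult (peval Ll) (fun x => / peval Bl x)); [apply continuous_peval|].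
  apply continuous_Rinv_comp; [apply continuous_peval | rewrite peval_Bl_0; lra].
Qed.

Lemma lim_logder_Phi3_0 : filterlim logder_Phi3 (locally 0) (locally 1).
Proof. rewrite <- logder_Phi3_0; exact continuous_logder_Phi3_0. Qed.

Definition regular_point (x : R) : Prop :=
  0 < 1 - x /\ 0 < F1 x /\ 0 < G0 x /\ 0 < G1 x /\ 0 < peval Ll x /\ Rabs (Phi3 x) < 1/16.

Lemma regular_point_Bl (x : R) : regular_point x -> 0 < peval Bl x.
Proof.
  intros (H1 & H2 & H3 & H4 & _); rewrite peval_Bl; repeat apply Rmult_lt_0_compat; assumption.
Qed.

Lemma regular_point_Wl (x : R) : regular_point x -> 0 < peval Wl x.
Proof.
  intros (_ & _ & H3 & H4 & _); rewrite peval_Wl; apply Rmult_lt_0_compat; apply pow_lt; assumption.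
Qed.

Lemma locally_regular_point : locally 0 regular_point.
Proof.
  assert (Hpos : forall p f, (forall y, peval p y = f y) -> f 0 = 1 ->
                             locally 0 (fun x => 0 < f x)).
  { intros p f Hp H0; apply locally_0_lt; [|lra].
    apply (continuous_ext (peval p)); [exact Hp | apply continuous_peval]. }
  repeat apply filter_and.
  - exact (Hpos _ _ peval_one_minus_Xl ltac:(ring)).
  - exact (Hpos _ _ peval_F1l F1_0).
  - exact (Hpos _ _ peval_G0l G0_0).
  - exact (Hpos _ _ peval_G1l G1_0).
  - exact (Hpos _ _ (fun y => eq_refl) peval_Ll_0).
  - generalize (locally_0_near Phi3 (1/16) continuous_Phi3_0 ltac:(lra)).
    apply filter_imp; intros x Hx; rewrite Phi3_0, Rminus_0_r in Hx; exact Hx.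
Qed.

Definition pullback_coef (q e : R) (x : R) : R :=
  logder_Phi3 x * (Phi3 x * q - e) / (1 - Phi3 x).

(* The hypergeometric equation at [z = Phi3 x], as a system for [(F, theta F, theta^2 F)],
   using [x d/dx = logder_Phi3 x * (z d/dz)]. *)
Definition pullback_system (a1 a2 a3 b1 b2 : R) :
  (R -> R) -> (R -> R) -> (R -> R) -> R -> Prop :=
  theta_system logder_Phi3 (pullback_coef (a1 * a2 * a3) 0)
    (pullback_coef (a1 * a2 + a1 * a3 + a2 * a3) ((b1 - 1) * (b2 - 1)))
    (pullback_coef (a1 + a2 + a3) ((b1 - 1) + (b2 - 1))).

Lemma lim_pullback_coef_0 (q e : R) : filterlim (pullback_coef q e) (locally 0) (locally (- e)).
Proof.
  replace (- e) with (pullback_coef q e 0)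
    by (unfold pullback_coef; rewrite logder_Phi3_0, Phi3_0; field).
  apply (continuous_mult (fun x => logder_Phi3 x * (Phi3 x * q - e)) (fun x => / (1 - Phi3 x))).
  - apply (continuous_mult logder_Phi3 (fun x => Phi3 x * q - e));
      [exact continuous_logder_Phi3_0|].
    apply (continuous_minus (fun x => Phi3 x * q) (fun _ => e)); [|apply continuous_const].
    apply (continuous_mult Phi3 (fun _ => q)); [exact continuous_Phi3_0 | apply continuous_const].
  - apply continuous_Rinv_comp; [|rewrite Phi3_0; lra].
    apply (continuous_minus (fun _ => 1) Phi3); [apply continuous_const | exact continuous_Phi3_0].
Qed.

Lemma theta_system_pullback (a1 a2 a3 b1 b2 x : R) :
  moderate_params a1 a2 a3 b1 b2 -> regular_point x ->
  pullback_system a1 a2 a3 b1 b2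
    (fun y => theta3F2 a1 a2 a3 b1 b2 0 (Phi3 y)) (fun y => theta3F2 a1 a2 a3 b1 b2 1 (Phi3 y))
    (fun y => theta3F2 a1 a2 a3 b1 b2 2 (Phi3 y)) x.
Proof.
  intros Hab Hx.
  pose proof (regular_point_Wl x Hx) as HW; pose proof (regular_point_Bl x Hx) as HB.
  destruct Hx as (_ & _ & _ & _ & _ & Hz).
  destruct (theta_derive_Phi3 x) as (DPhi & HDPhi & EPhi); [lra | lra |].
  set (T := theta3F2 a1 a2 a3 b1 b2) in *.
  destruct (is_derive_theta3F2 _ _ _ _ _ Hab 0 _ Hz) as (t0 & Ht0 & Et0).
  destruct (is_derive_theta3F2 _ _ _ _ _ Hab 1 _ Hz) as (t1 & Ht1 & Et1).
  destruct (is_derive_theta3F2 _ _ _ _ _ Hab 2 _ Hz) as (t2 & Ht2 & Et2).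
  pose proof (theta3F2_equation _ _ _ _ _ Hab _ Hz) as Hode; cbv zeta in Hode; fold T in Hode.
  exists (DPhi * t0), (DPhi * t1), (DPhi * t2).
  split; [apply (is_derive_comp (T 0%nat) Phi3); assumption|].
  split; [apply (is_derive_comp (T 1%nat) Phi3); assumption|].
  split; [apply (is_derive_comp (T 2%nat) Phi3); assumption|].
  assert (Hth : forall t, x * (DPhi * t) = logder_Phi3 x * (Phi3 x * t))
    by (intros; rewrite <- Rmult_assoc, EPhi; ring).
  rewrite !Hth, Et0, Et1, Et2.
  assert (H1 : 1 - Phi3 x <> 0) by (pose proof (Rle_abs (Phi3 x)); lra).
  split; [reflexivity|]; split; [reflexivity|]; unfold pullback_coef.
  apply (Rmult_eq_reg_r (1 - Phi3 x)); [|exact H1]; fold T.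
  transitivity (logder_Phi3 x * (T 3%nat (Phi3 x) - Phi3 x * T 3%nat (Phi3 x))); [ring|].
  replace (T 3%nat (Phi3 x) - Phi3 x * T 3%nat (Phi3 x)) with
    ((Phi3 x * (a1 + a2 + a3) - ((b1 - 1) + (b2 - 1))) * T 2%nat (Phi3 x)
     + (Phi3 x * (a1 * a2 + a1 * a3 + a2 * a3) - (b1 - 1) * (b2 - 1)) * T 1%nat (Phi3 x)
     + Phi3 x * (a1 * a2 * a3) * T 0%nat (Phi3 x)) by lra.
  field; exact H1.
Qed.

(** * The closed forms *)

Definition closed_factor (c0 cF c2 c3 : Q) (x : R) : R :=
  Rpower (1 - x) (Q2R c0) * Rpower (F1 x) (Q2R cF) * Rpower (G0 x) (Q2R c2)
  * Rpower (G1 x) (Q2R c3).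

Lemma peval_logder_num (c0 cF c2 c3 : Q) (x : R) :
  peval (logder_num c0 cF c2 c3) x =
  - Q2R c0 * F1 x * G0 x * G1 x + Q2R cF * peval (pder F1l) x * (1 - x) * G0 x * G1 x
  + Q2R c2 * peval (pder G0l) x * (1 - x) * F1 x * G1 x
  + Q2R c3 * peval (pder G1l) x * (1 - x) * F1 x * G0 x.
Proof.
  unfold logder_num; rewrite !peval_add, !peval_scal, !peval_mul.
  rewrite peval_one_minus_Xl, peval_F1l, peval_G0l, peval_G1l, Q2R_opp; ring.
Qed.

Lemma is_derive_closed_factor (c0 cF c2 c3 : Q) (x : R) : regular_point x ->
  is_derive (closed_factor c0 cF c2 c3) x
    (closed_factor c0 cF c2 c3 x * (peval (logder_num c0 cF c2 c3) x / peval Bl x)).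
Proof.
  intros Hx; pose proof (regular_point_Bl x Hx) as HB; destruct Hx as (H1 & H2 & H3 & H4 & _).
  assert (D1 : is_derive (fun y => 1 - y) x (-1)) by (auto_derive; [exact I | ring]).
  pose proof (is_derive_Rpower_comp _ x _ (Q2R c0) H1 D1) as E1.
  pose proof (is_derive_Rpower_comp _ x _ (Q2R cF) H2 (is_derive_peval_ext _ _ x peval_F1l)) as E2.
  pose proof (is_derive_Rpower_comp _ x _ (Q2R c2) H3 (is_derive_peval_ext _ _ x peval_G0l)) as E3.
  pose proof (is_derive_Rpower_comp _ x _ (Q2R c3) H4 (is_derive_peval_ext _ _ x peval_G1l)) as E4.
  pose proof (is_derive_Rmult _ _ x _ _
    (is_derive_Rmult _ _ x _ _ (is_derive_Rmult _ _ x _ _ E1 E2) E3) E4) as DE.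
  refine (@eq_ind R _ (is_derive (closed_factor c0 cF c2 c3) x) DE _ _); unfold closed_factor.
  rewrite peval_logder_num, peval_Bl; rewrite peval_Bl in HB; revert HB H1 H2 H3 H4.
  generalize (Rpower (1 - x) (Q2R c0)) (Rpower (F1 x) (Q2R cF)) (Rpower (G0 x) (Q2R c2))
    (Rpower (G1 x) (Q2R c3)) (F1 x) (G0 x) (G1 x) (peval (pder F1l) x) (peval (pder G0l) x)
    (peval (pder G1l) x).
  intros; field; repeat split; lra.
Qed.

Lemma closed_factor_0 (c0 cF c2 c3 : Q) : closed_factor c0 cF c2 c3 0 = 1.
Proof. unfold closed_factor; rewrite F1_0, G0_0, G1_0, Rminus_0_r, !Rpower_1_l; ring. Qed.

(* For [V1 = P * closed_factor c] and [H = logder_num c], the numerators of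
   [V2 = theta V1 / logder_Phi3] over [Ll] and of [V3 = theta V2 / logder_Phi3] over [Ll^3]. *)
Definition closed1_num (P H : list Q) : list Q := pmul Xl (padd (pmul (pder P) Bl) (pmul P H)).

Definition closed2_num (N2 H : list Q) : list Q :=
  pmul Xl (padd (pmul (psub (pmul (pder N2) Ll) (pmul N2 (pder Ll))) Bl) (pmul N2 (pmul H Ll))).

(* [theta V3 - (r0 V1 + r1 V2 + r2 V3)], with [r_i] the coefficients of [pullback_system],
   is [closed_factor c] times this polynomial over [Bl Ll^4]. *)
Definition closed_form_certificate (a1 a2 a3 b1 b2 : Q) (P H : list Q) : list Q :=
  let e1 := (b1 - 1 + (b2 - 1))%Q in let e2 := ((b1 - 1) * (b2 - 1))%Q in
  let q1 := (a1 + a2 + a3)%Q in let q2 := (a1 * a2 + a1 * a3 + a2 * a3)%Q in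
  let q3 := (a1 * a2 * a3)%Q in
  let N2 := closed1_num P H in let N3 := closed2_num N2 H in
  psub (pmul Xl (padd (pmul (psub (pmul (pder N3) Ll) (pscal 3 (pmul N3 (pder Ll)))) Bl)
                      (pmul N3 (pmul H Ll))))
    (padd (pscal q3 (pmul phil (pmul P (ppow Ll 3))))
      (padd (pmul (psub (pscal q2 phil) (pscal e2 Wl)) (pmul N2 (ppow Ll 2)))
            (pmul (psub (pscal q1 phil) (pscal e1 Wl)) N3))).

Section ClosedForm.

Variables (c0 cF c2 c3 : Q) (P : list Q).

Let E := closed_factor c0 cF c2 c3.

Let H := logder_num c0 cF c2 c3.

Let N2 := closed1_num P H.

Let N3 := closed2_num N2 H.

Definition closed0 (x : R) : R := E x * peval P x.

Definition closed1 (x : R) : R := E x * (peval N2 x / peval Ll x).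

Definition closed2 (x : R) : R := E x * (peval N3 x / peval Ll x ^ 3).

Lemma theta_system_closed_form (a1 a2 a3 b1 b2 : Q) (x : R) :
  pzerob (closed_form_certificate a1 a2 a3 b1 b2 P H) = true -> regular_point x ->
  pullback_system (Q2R a1) (Q2R a2) (Q2R a3) (Q2R b1) (Q2R b2) closed0 closed1 closed2 x.
Proof.
  intros Hcert Hx.
  pose proof (is_derive_closed_factor c0 cF c2 c3 x Hx) as DE; fold E H in DE.
  pose proof (regular_point_Bl x Hx) as HB; pose proof (regular_point_Wl x Hx) as HW.
  assert (HL : 0 < peval Ll x) by apply Hx.
  assert (HN2 : peval N2 x = x * (peval (pder P) x * peval Bl x + peval P x * peval H x)).
  { unfold N2, closed1_num; rewrite peval_mul, peval_add, !peval_mul, peval_Xl; reflexivity. }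
  assert (HN3 : peval N3 x = x * ((peval (pder N2) x * peval Ll x - peval N2 x * peval (pder Ll) x)
                                  * peval Bl x + peval N2 x * (peval H x * peval Ll x))).
  { unfold N3, closed2_num.
    rewrite peval_mul, peval_add, !peval_mul, peval_sub, !peval_mul, peval_Xl.
    reflexivity. }
  pose proof (peval_eq_of_pzerob _ _ x Hcert) as Hid.
  unfold closed_form_certificate in Hid; cbv zeta in Hid.
  fold N2 N3 in Hid.
  repeat (rewrite peval_mul in Hid || rewrite peval_add in Hid || rewrite peval_sub in Hid
          || rewrite peval_scal in Hid || rewrite peval_pow in Hid).
  rewrite peval_Xl, !Q2R_plus, !Q2R_mult, !Q2R_minus, RMicromega.Q2R_1 in Hid.
  replace (Q2R 3) with 3 in Hid by (unfold Q2R; cbn; field).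
  eexists; eexists; eexists; split; [|split; [|split; [|split; [|split]]]].
  - unfold closed0; apply is_derive_Rmult; [exact DE | apply is_derive_peval].
  - unfold closed1; apply is_derive_Rmult; [exact DE|].
    apply (is_derive_div (peval N2) (peval Ll)); [apply is_derive_peval.. | lra].
  - unfold closed2; apply is_derive_Rmult; [exact DE|].
    apply (is_derive_div (peval N3) (fun y => peval Ll y ^ 3)); [apply is_derive_peval| |].
    + apply (is_derive_pow (peval Ll)), is_derive_peval.
    + apply pow_nonzero; lra.
  - unfold closed1, logder_Phi3; rewrite HN2; revert HB HL.
    generalize (E x) (peval H x) (peval Bl x) (peval P x) (peval (pder P) x) (peval Ll x).
    intros; field; lra.
  - unfold closed2, logder_Phi3; cbv beta; rewrite HN3; revert HB HL.
    generalize (E x) (peval H x) (peval Bl x) (peval N2 x) (peval (pder N2) x) (peval Ll x)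
      (peval (pder Ll) x).
    intros; field; lra.
  - unfold closed0, closed1, closed2, pullback_coef, logder_Phi3; cbv beta; cbn [Init.Nat.pred].
    replace (INR 3) with 3 by (cbn; ring).
    rewrite one_minus_Phi3, Phi3_peval by lra.
    revert Hid HB HL HW.
    generalize (E x) (peval H x) (peval Bl x) (peval P x) (peval N2 x) (peval N3 x)
      (peval (pder N3) x) (peval Ll x) (peval (pder Ll) x) (peval phil x) (peval Wl x).
    intros e h b p n2 n3 dn3 l dl ph w Hid HB HL HW.
    transitivity (e * (x * ((dn3 * l - 3 * (n3 * dl)) * b + n3 * (h * l))) / (b * l ^ 4));
      [field; lra|].
    rewrite Hid; field; lra.
Qed.

End ClosedForm.

(** * The three identities *)

Theorem closed_form_criterion (a1 a2 a3 b1 b2 c0 cF c2 c3 : Q) (P : list Q) :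
  moderate_params (Q2R a1) (Q2R a2) (Q2R a3) (Q2R b1) (Q2R b2) ->
  admissible_exponents (Q2R b1 - 1) (Q2R b2 - 1) ->
  pzerob (closed_form_certificate a1 a2 a3 b1 b2 P (logder_num c0 cF c2 c3)) = true ->
  peval P 0 = 1 ->
  locally 0 (fun x => is_3F2 (Q2R a1) (Q2R a2) (Q2R a3) (Q2R b1) (Q2R b2) (Phi3 x)
                        (peval P x * closed_factor c0 cF c2 c3 x)).
Proof.
  intros Hab (Hb1 & Hb2 & Hb1_abs & Hb2_abs & Hgap & Hprod) Hcert HP0.
  set (T := theta3F2 (Q2R a1) (Q2R a2) (Q2R a3) (Q2R b1) (Q2R b2)).
  assert (Hsys : locally 0 (pullback_system (Q2R a1) (Q2R a2) (Q2R a3) (Q2R b1) (Q2R b2)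
    (fun y => T 0%nat (Phi3 y) - closed0 c0 cF c2 c3 P y)
    (fun y => T 1%nat (Phi3 y) - closed1 c0 cF c2 c3 P y)
    (fun y => T 2%nat (Phi3 y) - closed2 c0 cF c2 c3 P y))).
  { generalize locally_regular_point; apply filter_imp; intros x Hx.
    apply theta_system_minus;
      [apply theta_system_pullback | apply theta_system_closed_form]; assumption. }
  assert (Hclosed0 : closed0 c0 cF c2 c3 P 0 = 1)
    by (unfold closed0; rewrite closed_factor_0, HP0; ring).
  assert (Hnum0 : forall p, peval (pmul Xl p) 0 = 0)
    by (intros; rewrite peval_mul, peval_Xl; ring).
  assert (Hclosed1 : closed1 c0 cF c2 c3 P 0 = 0)
    by (unfold closed1, closed1_num; rewrite Hnum0; field; rewrite peval_Ll_0; lra).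
  assert (Hclosed2 : closed2 c0 cF c2 c3 P 0 = 0)
    by (unfold closed2, closed2_num; rewrite Hnum0; field; rewrite peval_Ll_0; lra).
  pose proof (theta3F2_at_0 (Q2R a1) (Q2R a2) (Q2R a3) (Q2R b1) (Q2R b2)) as HT0; fold T in HT0.
  pose proof (lim_pullback_coef_0 (Q2R a1 * Q2R a2 * Q2R a3) 0) as Hr0; rewrite Ropp_0 in Hr0.
  generalize (filter_and _ _ locally_regular_point
    (theta_system_locally_eq0 (Q2R b1 - 1) (Q2R b2 - 1) Hb1 Hb2 Hb1_abs Hb2_abs Hgap Hprod
       _ _ _ _ _ _ _ lim_logder_Phi3_0 Hr0
       (lim_pullback_coef_0 _ _) (lim_pullback_coef_0 _ _) Hsys
       ltac:(cbv beta; rewrite Phi3_0, HT0, Hclosed0; ring)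
       ltac:(cbv beta; rewrite Phi3_0, HT0, Hclosed1; ring)
       ltac:(cbv beta; rewrite Phi3_0, HT0, Hclosed2; ring))).
  apply filter_imp; intros x [Hx Hd]; cbv beta in Hd.
  replace (peval P x * closed_factor c0 cF c2 c3 x) with (T 0%nat (Phi3 x))
    by (unfold closed0 in Hd; lra).
  apply is_3F2_theta3F2; [exact Hab | apply Hx].
Qed.

Ltac check_params :=
  rewrite ?Q2R_lit; unfold moderate_params, admissible_exponents;
  repeat split; unfold Rabs; repeat destruct Rcase_abs; lra.

Ltac closed_form_value cF k :=
  cbn [peval]; unfold closed_factor;
  replace (Q2R cF) with (- INR k) by (unfold Q2R; cbn; field);
  rewrite Rpower_opp_INR, !Q2R_lit by assumption; field; lra.

Lemma hypergeometric_identity1 :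
  locally 0 (fun x => is_3F2 (-1/14) (11/42) (25/42) (4/7) (5/7) (Phi3 x)
    ((1 - 3*x) * Rpower (1 - x) (3/7) * Rpower (G0 x) (-3/14) * Rpower (G1 x) (-3/14))).
Proof.
  pose proof (closed_form_criterion (-1#14) (11#42) (25#42) (4#7) (5#7) (3#7) 0 (-3#14) (-3#14)
    [1; -3]%Q) as Hc.
  specialize (Hc ltac:(check_params) ltac:(check_params) ltac:(vm_compute; reflexivity)
                 ltac:(peval_explicit)).
  generalize (filter_and _ _ locally_regular_point Hc); apply filter_imp.
  intros x [(_ & HF1 & _) H].
  replace ((1 - 3*x) * Rpower (1 - x) (3/7) * Rpower (G0 x) (-3/14) * Rpower (G1 x) (-3/14))
    with (peval [1; -3]%Q x * closed_factor (3#7) 0 (-3#14) (-3#14) x)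
    by closed_form_value 0%Q 0%nat.
  exact H.
Qed.

Lemma hypergeometric_identity2 :
  locally 0 (fun x => is_3F2 (3/14) (23/42) (37/42) (6/7) (9/7) (Phi3 x)
    ((1 - 2*x/3) * Rpower (1 - x) (-2/7) / F1 x ^ 2 * Rpower (G0 x) (9/14) * Rpower (G1 x) (9/14))).
Proof.
  pose proof (closed_form_criterion (3#14) (23#42) (37#42) (6#7) (9#7) (-2#7) (-2) (9#14) (9#14)
    [1; -2#3]%Q) as Hc.
  specialize (Hc ltac:(check_params) ltac:(check_params) ltac:(vm_compute; reflexivity)
                 ltac:(peval_explicit)).
  generalize (filter_and _ _ locally_regular_point Hc); apply filter_imp.
  intros x [(_ & HF1 & _) H].
  replace ((1 - 2*x/3) * Rpower (1 - x) (-2/7) / F1 x ^ 2 * Rpower (G0 x) (9/14)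
           * Rpower (G1 x) (9/14))
    with (peval [1; -2#3]%Q x * closed_factor (-2#7) (-2) (9#14) (9#14) x)
    by closed_form_value (-2)%Q 2%nat.
  exact H.
Qed.

Lemma hypergeometric_identity3 :
  locally 0 (fun x => is_3F2 (5/14) (29/42) (43/42) (8/7) (10/7) (Phi3 x)
    ((1 + x/2) * Rpower (1 - x) (-1/7) / F1 x ^ 3 * Rpower (G0 x) (15/14) * Rpower (G1 x) (15/14))).
Proof.
  pose proof (closed_form_criterion (5#14) (29#42) (43#42) (8#7) (10#7) (-1#7) (-3) (15#14) (15#14)
    [1; 1#2]%Q) as Hc.
  specialize (Hc ltac:(check_params) ltac:(check_params) ltac:(vm_compute; reflexivity)
                 ltac:(peval_explicit)).
  generalize (filter_and _ _ locally_regular_point Hc); apply filter_imp.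
  intros x [(_ & HF1 & _) H].
  replace ((1 + x/2) * Rpower (1 - x) (-1/7) / F1 x ^ 3 * Rpower (G0 x) (15/14)
           * Rpower (G1 x) (15/14))
    with (peval [1; 1#2]%Q x * closed_factor (-1#7) (-3) (15#14) (15#14) x)
    by closed_form_value (-3)%Q 3%nat.
  exact H.
Qed.

Theorem mainTheorem8 :
  exists eps : R, 0 < eps /\
  forall x : R, Rabs x < eps ->
    is_3F2 (-1/14) (11/42) (25/42) (4/7) (5/7) (Phi3 x)
      ((1 - 3*x) * Rpower (1 - x) (3/7)
         * Rpower (G0 x) (-3/14) * Rpower (G1 x) (-3/14))
    /\
    is_3F2 (3/14) (23/42) (37/42) (6/7) (9/7) (Phi3 x)
      ((1 - 2*x/3) * Rpower (1 - x) (-2/7) / F1 x ^ 2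
         * Rpower (G0 x) (9/14) * Rpower (G1 x) (9/14))
    /\
    is_3F2 (5/14) (29/42) (43/42) (8/7) (10/7) (Phi3 x)
      ((1 + x/2) * Rpower (1 - x) (-1/7) / F1 x ^ 3
         * Rpower (G0 x) (15/14) * Rpower (G1 x) (15/14)).
Proof.
  apply locally_0_iff.
  exact (filter_and _ _ hypergeometric_identity1
           (filter_and _ _ hypergeometric_identity2 hypergeometric_identity3)).
Qed.
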